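(* For every integer $r\ge 3$, $m(r)\ge (r-1)^{r-1}$.
   Context: A bi-hypergraph $\mathcal H=(V,E)$ consists of a finite vertex set $V$ and a set $E$ of subsets of $V$, called edges, with no edge contained in another. It is $r$-uniform if every edge has exactly $r$ elements. A mapping $f:V\to\mathbb N$ is a proper coloring of $\mathcal H$ if $1<|f(e)|<|e|$ for every $e\in E$, where $f(e)=\{f(v):v\in e\}$. $\mathcal H$ is colorable if it has a proper coloring, and uncolorable otherwise. A subhypergraph of $\mathcal H$ is a bi-hypergraph $(V',E')$ with $V'\subseteq V$, $E'\subseteq E$. $\mathcal H$ is minimal uncolorable if it is uncolorable but every proper subhypergraph of it is colorable. $m(r)$ denotes the smallest positive integer $m$ for which there exists a minimal uncolorable $r$-uniform bi-hypergraph with exactly $m$ edges. *)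

From mathcomp Require Import all_boot.
Set Implicit Arguments. Unset Strict Implicit. Unset Printing Implicit Defensive.

Definition bihypergraph (T : finType) (V : {set T}) (E : {set {set T}}) : Prop :=
  (forall e, e \in E -> e \subset V) /\
  (forall e e', e \in E -> e' \in E -> e \subset e' -> e = e').

Definition r_uniform (T : finType) (r : nat) (E : {set {set T}}) : Prop :=
  forall e, e \in E -> #|e| = r.

Definition ncolors (T : finType) (f : T -> nat) (e : {set T}) : nat :=
  size (undup [seq f x | x <- enum e]).

Definition proper_coloring (T : finType) (E : {set {set T}}) (f : T -> nat) : Prop :=
  forall e, e \in E -> 1 < ncolors f e < #|e|.

Definition colorable (T : finType) (V : {set T}) (E : {set {set T}}) : Prop :=
  exists f : T -> nat, proper_coloring E f.

Definition subhypergraph (T : finType) (V' : {set T}) (E' : {set {set T}})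
    (V : {set T}) (E : {set {set T}}) : Prop :=
  bihypergraph V' E' /\ V' \subset V /\ E' \subset E.

Definition minimal_uncolorable (T : finType) (V : {set T}) (E : {set {set T}}) : Prop :=
  bihypergraph V E /\ ~ colorable V E /\
  (forall V' E', subhypergraph V' E' V E -> (V', E') <> (V, E) -> colorable V' E').

From mathcomp Require Import all_boot.

(* Proof idea (a first-moment / counting argument).  Let k = r - 1 and
   let E be an r-uniform edge set.  Colour the ground type with the k colours
   'I_k in all k ^ n ways (n = #|T|).  For an edge e and a colour c, exactly
   k ^ (n - r) colourings paint e entirely with c, so at most
   #|E| * k * k ^ (n - r) colourings are monochromatic on some edge.  When
   #|E| < k ^ (r - 1) this is fewer than k ^ n, hence some colouring g is
   monochromatic on no edge.  Such a g uses at least 2 colours on every edge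
   and, having only k = r - 1 colours at its disposal, fewer than r colours on
   every edge: g is a proper colouring.  Hence an uncolorable r-uniform
   bi-hypergraph, in particular a minimal uncolorable one, has at least
   (r - 1) ^ (r - 1) edges. *)

Lemma card_bigcup_le {I U : finType} (P : pred I) (F : I -> {set U}) :
  #|\bigcup_(i | P i) F i| <= \sum_(i | P i) #|F i|.
Proof.
elim/big_rec2: _ => [|i n S _ leSn]; first by rewrite cards0.
by rewrite (leq_trans (leq_card_setU (F i) S).1) ?leq_add2l.
Qed.

Lemma ncolors_le1_const {T : finType} {f : T -> nat} {e : {set T}} {x y : T} :
  ncolors f e <= 1 -> x \in e -> y \in e -> f x = f y.
Proof.
rewrite /ncolors => le1 xe ye.
have inS z : z \in e -> f z \in undup [seq f x | x <- enum e].
  by move=> ze; rewrite mem_undup map_f ?mem_enum.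
move: le1 (inS x xe) (inS y ye).
by case: (undup _) => [|a [|b s]] //= _; rewrite !inE => /eqP -> /eqP ->.
Qed.

Lemma ncolors_ord_le {T : finType} {k : nat} (g : T -> 'I_k) (e : {set T}) :
  ncolors (fun x => nat_of_ord (g x)) e <= k.
Proof.
rewrite /ncolors -[k in _ <= k](size_iota 0) uniq_leq_size ?undup_uniq //.
by move=> z; rewrite mem_undup => /mapP[y _ ->]; rewrite mem_iota /=.
Qed.

Section MonochromaticColorings.
Context {T : finType} {k : nat}.

Definition mono_colorings (e : {set T}) (c : 'I_k) : {set {ffun T -> 'I_k}} :=
  [set g in family (fun x => if x \in e then pred1 c else predT)].

(* Such a colouring is free outside e and fixed on e. *)
Lemma card_mono_colorings e c : #|mono_colorings e c| = k ^ (#|T| - #|e|).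
Proof.
rewrite cardsE card_family foldrE big_map big_enum /=.
rewrite (eq_bigr (fun x => if x \in e then 1 else k)); last first.
  by move=> x _; case: (x \in e); rewrite ?card1 // cardT size_enum_ord.
rewrite (bigID (mem e)) /= big1 ?mul1n; last by move=> i ->.
rewrite (eq_bigr (fun _ => k)); last by move=> i /negbTE ->.
rewrite -(card_ord k) (eq_bigl (mem (~: e))); last by move=> i; rewrite !inE.
by rewrite prod_nat_const card_ord -(cardsC e) addKn.
Qed.

Lemma mono_coloringsP (g : {ffun T -> 'I_k}) (e : {set T}) x0 :
  (forall x, x \in e -> g x = g x0) -> g \in mono_colorings e (g x0).
Proof.
move=> const; rewrite inE; apply/familyP => x /=.
by case: ifP => // xe; rewrite inE const.
Qed.

Lemma exists_nowhere_mono_coloring {r : nat} {E : {set {set T}}} :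
  0 < k -> 0 < r <= #|T| -> r_uniform r E -> #|E| < k ^ r.-1 ->
  exists g : {ffun T -> 'I_k}, forall e c, e \in E -> g \notin mono_colorings e c.
Proof.
move=> k_gt0 /andP[r_gt0 r_leT] unif small.
pose Bad := \bigcup_(p in setX E [set: 'I_k]) mono_colorings p.1 p.2.
have card_Bad : #|Bad| < #|{ffun T -> 'I_k}|.
  apply: leq_ltn_trans (card_bigcup_le _ _) _.
  rewrite (eq_bigr (fun _ => k ^ (#|T| - r))); last first.
    by move=> [e c]; rewrite !inE andbT => eE; rewrite card_mono_colorings unif.
  rewrite sum_nat_const cardsX cardsT card_ord card_ffun card_ord.
  have -> : k ^ #|T| = k ^ r.-1 * (k * k ^ (#|T| - r)).
    by rewrite -expnS -expnD -addSnnS prednK // subnKC.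
  by rewrite -mulnA ltn_pmul2r // muln_gt0 !expn_gt0 k_gt0.
have /subsetPn[g _ gBad] : ~~ ([set: {ffun T -> 'I_k}] \subset Bad).
  by apply: contraL card_Bad => /subset_leq_card; rewrite cardsT -leqNgt.
exists g => e c eE; apply: contra gBad => g_mono.
by apply/bigcupP; exists (e, c); rewrite // !inE eE.
Qed.

End MonochromaticColorings.

(* An r-uniform bi-hypergraph with fewer than (r - 1) ^ (r - 1) edges is
   colorable: a nowhere-monochromatic (r - 1)-colouring is proper. *)
Lemma colorable_of_few_edges {T : finType} {V : {set T}} {E : {set {set T}}} {r : nat} :
  r_uniform r E -> #|E| < (r - 1) ^ (r - 1) -> colorable V E.
Proof.
move=> unif small.
have [E0 | [e0 e0E]] := set_0Vmem E.
  by exists (fun _ => 0) => e; rewrite E0 inE.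
have r_leT : r <= #|T| by rewrite -(unif e0 e0E) max_card.
(* with no colour available, E would have to be empty *)
have k_gt0 : 0 < r - 1.
  rewrite lt0n; apply: contraTneq small => ->.
  by rewrite expn0 -leqNgt card_gt0; apply/set0Pn; exists e0.
have r_gt1 : 1 < r by rewrite -subn_gt0.
have r_range : 0 < r <= #|T| by rewrite ltnW.
have few_edges : #|E| < (r - 1) ^ r.-1 by rewrite -subn1.
have [g nomono] := exists_nowhere_mono_coloring k_gt0 r_range unif few_edges.
exists (fun x => nat_of_ord (g x)) => e eE.
apply/andP; split; last first.
  by apply: leq_ltn_trans (ncolors_ord_le g e) _; rewrite unif // subn1 ltn_predL ltnW.
rewrite ltnNge; apply/negP => le1.
have [x0 x0e] : exists x0, x0 \in e.
  by apply/set0Pn; rewrite -card_gt0 unif // ltnW.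
apply: (negP (nomono e (g x0) eE)); apply: mono_coloringsP => x xe.
by apply: val_inj; exact: (ncolors_le1_const le1 xe x0e).
Qed.

Theorem mainTheorem2 (r : nat) (hr : 3 <= r) (T : finType)
    (V : {set T}) (E : {set {set T}}) :
  minimal_uncolorable V E -> r_uniform r E -> (r - 1) ^ (r - 1) <= #|E|.
Proof.
move=> [_ [uncolorable _]] unif.
rewrite leqNgt; apply/negP => small.
by apply: uncolorable; apply: colorable_of_few_edges unif small.
Qed.
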